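(* Let $\mathcal T$ be the Coons volume built from blending functions $F_0,F_1$ and boundary data $g$ (see context). Suppose there are constant vectors $\mathbf w_1,\mathbf w_2,\mathbf w_3\in\mathbb R^3$ such that opposite faces are translates of each other: $$g(1,v,w)=g(0,v,w)+\mathbf w_1,\quad g(u,1,w)=g(u,0,w)+\mathbf w_2,\quad g(u,v,1)=g(u,v,0)+\mathbf w_3\qquad\text{for all }u,v,w\in[0,1],$$ and that the images of each pair of opposite faces are disjoint. Define, for $(u,v,w)\in[0,1]^3$, $$\mathcal H_1=\partial_ug(u,0,w)+\partial_ug(u,v,0)-\partial_ug(u,1,1),\quad \mathcal H_2=\partial_vg(u,v,0)+\partial_vg(1,v,w)-\partial_vg(1,v,1),\quad \mathcal H_3=\partial_wg(1,v,w)+\partial_wg(u,0,w)-\partial_wg(1,1,w).$$ If there exists $\tau>0$ such that $\det[\mathcal H_1,\mathcal H_2,\mathcal H_3](u,v,w)>\tau$ for all $(u,v,w)\in[0,1]^3$, then $\mathcal T$ is regular, i.e. $\det[\partial_u\mathcal T,\partial_v\mathcal T,\partial_w\mathcal T]>0$ on $[0,1]^3$.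
   Context: Blending functions: $F_0,F_1:[0,1]\to\mathbb R$ are continuously differentiable with $F_0(t)+F_1(t)=1$ for all $t$, $F_0(0)=1$, $F_0(1)=0$ (hence $F_1(0)=0$, $F_1(1)=1$). Boundary data: $g:\partial([0,1]^3)\to\mathbb R^3$ is a map on the boundary of the unit cube whose restriction to each of the six closed faces is continuously differentiable as a function of the two free coordinates. Its values are written $g(a,v,w)$, $g(u,b,w)$, $g(u,v,c)$ with $a,b,c\in\{0,1\}$ and the remaining coordinates in $[0,1]$; on edges (e.g. $g(u,b,c)$) these are restrictions of $g$, and $\partial_u g(u,b,c)$ etc. denote derivatives along the edge. Coons volume: for $(u,v,w)\in[0,1]^3$, $$\mathcal T(u,v,w)=\sum_{a}F_a(u)g(a,v,w)+\sum_{b}F_b(v)g(u,b,w)+\sum_{c}F_c(w)g(u,v,c)-\sum_{a,b}F_a(u)F_b(v)g(a,b,w)-\sum_{b,c}F_b(v)F_c(w)g(u,b,c)-\sum_{a,c}F_a(u)F_c(w)g(a,v,c)+\sum_{a,b,c}F_a(u)F_b(v)F_c(w)g(a,b,c),$$ all sums over $a,b,c\in\{0,1\}$. $\mathcal T$ is called regular if its Jacobian determinant $\det[\partial_u\mathcal T,\partial_v\mathcal T,\partial_w\mathcal T]$ is strictly positive on $[0,1]^3$. *)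

From HB Require Import structures.
From mathcomp Require Import all_boot all_order all_algebra.
From mathcomp Require Import all_classical all_reals all_analysis.
Set Implicit Arguments. Unset Strict Implicit. Unset Printing Implicit Defensive.
Import Order.TTheory GRing.Theory Num.Theory.
Import numFieldNormedType.Exports.
Local Open Scope classical_set_scope.
Local Open Scope ring_scope.

Section Defs.
Variable R : realType.

Definition in01 (x : R) : Prop := 0 <= x <= 1.

(* one-sided-at-the-ends derivative of f at x, taken within [0,1]:
   the difference quotient (f(x+h)-f(x))/h tends to l as h -> 0, h <> 0, x+h in [0,1] *)
Definition has_deriv01 (V : normedModType R) (f : R -> V) (x : R) (l : V) : Prop :=
  (fun h : R => h^-1 *: (f (x + h) - f x)) @ within (fun h : R => in01 (x + h)) (0 : R)^'
    --> l.

Definition d01 (V : normedModType R) (f : R -> V) (x : R) : V :=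
  xget 0 (has_deriv01 f x).

Definition C1_01 (V : normedModType R) (f : R -> V) : Prop :=
  (forall x, in01 x -> exists l, has_deriv01 f x l) /\
  {within in01, continuous (d01 f)}.

Definition square01 : set (R * R) := fun st => in01 st.1 /\ in01 st.2.

Definition C1_square (V : normedModType R) (f : R -> R -> V) : Prop :=
  (forall s t, in01 s -> in01 t -> exists l, has_deriv01 (fun s' => f s' t) s l) /\
  (forall s t, in01 s -> in01 t -> exists l, has_deriv01 (fun t' => f s t') t l) /\
  {within square01, continuous (fun st : R * R => d01 (fun s' => f s' st.2) st.1)} /\
  {within square01, continuous (fun st : R * R => d01 (fun t' => f st.1 t') st.2)}.

Definition b2r (a : bool) : R := if a then 1 else 0.

Definition Fb (F0 F1 : R -> R) (a : bool) : R -> R := if a then F1 else F0.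

Definition det3 (a b c : 'rV[R]_3) : R :=
  \det (\matrix_(i < 3, j < 3)
          (if (i : nat) == 0%N then a 0 j else if (i : nat) == 1%N then b 0 j else c 0 j)).

Definition coons (F0 F1 : R -> R) (g : R -> R -> R -> 'rV[R]_3) (u v w : R) : 'rV[R]_3 :=
  let F := Fb F0 F1 in
    \sum_(a : bool) F a u *: g (b2r a) v w
  + \sum_(b : bool) F b v *: g u (b2r b) w
  + \sum_(c : bool) F c w *: g u v (b2r c)
  - \sum_(a : bool) \sum_(b : bool) (F a u * F b v) *: g (b2r a) (b2r b) w
  - \sum_(b : bool) \sum_(c : bool) (F b v * F c w) *: g u (b2r b) (b2r c)
  - \sum_(a : bool) \sum_(c : bool) (F a u * F c w) *: g (b2r a) v (b2r c)
  + \sum_(a : bool) \sum_(b : bool) \sum_(c : bool)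
       (F a u * F b v * F c w) *: g (b2r a) (b2r b) (b2r c).

Definition regular (T : R -> R -> R -> 'rV[R]_3) : Prop :=
  forall u v w, in01 u -> in01 v -> in01 w ->
    (exists l, has_deriv01 (fun s => T s v w) u l) /\
    (exists l, has_deriv01 (fun s => T u s w) v l) /\
    (exists l, has_deriv01 (fun s => T u v s) w l) /\
    0 < det3 (d01 (fun s => T s v w) u) (d01 (fun s => T u s w) v)
             (d01 (fun s => T u v s) w).

End Defs.
Arguments b2r {R} a.
Arguments in01 {R} x.

(* Because opposite faces are translates of each other, the blending functions cancel
   from the Coons volume: on the unit cube it equals
     g(0,v,w) + g(u,0,w) + g(u,v,0) - g(0,0,w) - g(u,0,0) - g(0,v,0) + g(0,0,0).
   Using the face relations once more, each partial derivative of this expression is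
   H1, H2, H3 respectively (the translation vectors only shift it by constants), so the
   Jacobian determinant is det[H1,H2,H3] > tau > 0. *)
From HB Require Import structures.
From mathcomp Require Import all_boot all_order all_algebra.
From mathcomp Require Import all_classical all_reals all_analysis.
From mathcomp Require Import ring lra.
Import Order.TTheory GRing.Theory Num.Theory.
Import numFieldNormedType.Exports.
Local Open Scope classical_set_scope.
Local Open Scope ring_scope.

Lemma in01_0 (R : realType) : in01 (0 : R).
Proof. by rewrite /in01 lexx ler01. Qed.

Lemma in01_1 (R : realType) : in01 (1 : R).
Proof. by rewrite /in01 lexx ler01. Qed.

Section Deriv01.
Variable R : realType.
Implicit Types x : R.

Lemma within01_dnbhs_proper {x} : in01 x ->
  ProperFilter (within (fun h : R => in01 (x + h)) (0 : R)^').
Proof.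
move=> /andP[x0 x1]; constructor; last exact: within_filter.
rewrite /within /dnbhs /= => /nbhs_ballP [e /= e0 He].
have [d [d0 de dh]] : exists d : R, [/\ 0 < d, d < e & d <= 1/2].
  by have [e1|e1] := leP e 1; [exists (e/2) | exists (1/2)]; split; lra.
(* step right from the left half of [0,1], left from the right half *)
have [y [y0 ye yi]] : exists y : R, [/\ y != 0, `|y| < e & in01 (x + y)].
  have [xh|xh] := leP x (1/2).
    exists d; rewrite gt_eqF // gtr0_norm //; split=> //.
    by apply/andP; split; lra.
  exists (-d); rewrite oppr_eq0 gt_eqF // normrN gtr0_norm //; split=> //.
  by apply/andP; split; lra.
by apply: (He y) => //; rewrite /ball /= sub0r normrN.
Qed.

Variable V : normedModType R.
Implicit Types f g : R -> V.

Lemma d01P f x : (exists l, has_deriv01 f x l) -> has_deriv01 f x (d01 f x).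
Proof. exact: xgetPex. Qed.

Lemma d01_unique f x l : in01 x -> has_deriv01 f x l -> d01 f x = l.
Proof.
move=> x01 fl; have proper_x := within01_dnbhs_proper x01.
have fd : has_deriv01 f x (d01 f x) by apply: d01P; exists l.
exact: (cvg_unique _ fd fl).
Qed.

Lemma has_deriv01_eq_in {f g x} : in01 x -> (forall y, in01 y -> f y = g y) ->
  has_deriv01 f x = has_deriv01 g x.
Proof.
move=> x01 efg; apply/funext => l; apply/propext.
have E : {near within (fun h : R => in01 (x + h)) (0 : R)^',
   (fun h => h^-1 *: (f (x + h) - f x)) =1 (fun h => h^-1 *: (g (x + h) - g x))}.
  by rewrite near_withinE; apply: nearW => h /= hx; rewrite efg // (efg _ x01).
split=> H; apply: cvg_trans H; apply: near_eq_cvg => //.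
by apply: filterS E => h ->.
Qed.

Lemma d01_eq_in {f g x} : in01 x -> (forall y, in01 y -> f y = g y) ->
  d01 f x = d01 g x.
Proof. by move=> x01 efg; rewrite /d01 (has_deriv01_eq_in x01 efg). Qed.

Lemma has_deriv01D f g x a b : has_deriv01 f x a -> has_deriv01 g x b ->
  has_deriv01 (fun s => f s + g s) x (a + b).
Proof.
move=> fa gb; rewrite /has_deriv01.
have -> : (fun h : R => h^-1 *: (f (x + h) + g (x + h) - (f x + g x))) =
  (fun h => h^-1 *: (f (x + h) - f x) + h^-1 *: (g (x + h) - g x)).
  by apply/funext => h; rewrite -scalerDr opprD addrACA.
exact: cvgD fa gb.
Qed.

Lemma has_deriv01B f g x a b : has_deriv01 f x a -> has_deriv01 g x b ->
  has_deriv01 (fun s => f s - g s) x (a - b).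
Proof.
move=> fa gb; rewrite /has_deriv01.
have -> : (fun h : R => h^-1 *: (f (x + h) - g (x + h) - (f x - g x))) =
  (fun h => h^-1 *: (f (x + h) - f x) - h^-1 *: (g (x + h) - g x)).
  by apply/funext => h; rewrite -scalerBr !opprD !opprK addrACA.
exact: cvgB fa gb.
Qed.

Lemma has_deriv01_addr f x a (c : V) :
  has_deriv01 f x a -> has_deriv01 (fun s => f s + c) x a.
Proof.
rewrite /has_deriv01.
have -> // : (fun h : R => h^-1 *: (f (x + h) + c - (f x + c))) =
  (fun h => h^-1 *: (f (x + h) - f x)).
by apply/funext => h; rewrite opprD addrACA subrr addr0.
Qed.

Lemma d01_addB_cst_diff (f A B C : R -> V) x : in01 x ->
  (forall y z, in01 y -> in01 z ->
     f y - (A y + B y - C y) = f z - (A z + B z - C z)) ->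
  (exists l, has_deriv01 A x l) -> (exists l, has_deriv01 B x l) ->
  (exists l, has_deriv01 C x l) ->
  (exists l, has_deriv01 f x l) /\ d01 f x = d01 A x + d01 B x - d01 C x.
Proof.
move=> x01 cst dA dB dC.
pose K := f x - (A x + B x - C x).
have fE y : in01 y -> f y = A y + B y - C y + K.
  by move=> y01; rewrite /K -(cst y x y01 x01) addrC subrK.
have dABC : has_deriv01 (fun y => A y + B y - C y + K) x
    (d01 A x + d01 B x - d01 C x).
  by apply/has_deriv01_addr/has_deriv01B; [apply: has_deriv01D|]; exact: d01P.
rewrite (has_deriv01_eq_in x01 fE) (d01_eq_in x01 fE).
by split; [exists (d01 A x + d01 B x - d01 C x) | exact: d01_unique].
Qed.

End Deriv01.

Section CoonsTranslatedFaces.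
Context {R : realType} {F0 F1 : R -> R} {g : R -> R -> R -> 'rV[R]_3}.
Context {w1 w2 w3 : 'rV[R]_3}.
Hypothesis F01 : forall t, in01 t -> F0 t + F1 t = 1.
Hypothesis g_face1 : forall v w, in01 v -> in01 w -> g 1 v w = g 0 v w + w1.
Hypothesis g_face2 : forall u w, in01 u -> in01 w -> g u 1 w = g u 0 w + w2.
Hypothesis g_face3 : forall u v, in01 u -> in01 v -> g u v 1 = g u v 0 + w3.
Hypothesis g_C1_1 : forall a : bool, C1_square (fun v w => g (b2r a) v w).
Hypothesis g_C1_2 : forall b : bool, C1_square (fun u w => g u (b2r b) w).
Hypothesis g_C1_3 : forall c : bool, C1_square (fun u v => g u v (b2r c)).

Let T := coons F0 F1 g.

Lemma coons_translated_faces u v w : in01 u -> in01 v -> in01 w ->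
  T u v w = g 0 v w + g u 0 w + g u v 0 - g 0 0 w - g u 0 0 - g 0 v 0 + g 0 0 0.
Proof.
move=> u01 v01 w01; have i0 := in01_0 R; have i1 := in01_1 R.
have F0E t : in01 t -> F0 t = 1 - F1 t by move=> t01; rewrite -(F01 t t01) addrK.
rewrite /T /coons !big_bool /= !g_face1 // !g_face2 // !g_face3 // !F0E //.
by apply/rowP => j; rewrite !mxE; ring.
Qed.

Lemma coons_d01_u {u v w} : in01 u -> in01 v -> in01 w ->
  (exists l, has_deriv01 (fun s => T s v w) u l) /\
  d01 (fun s => T s v w) u =
    d01 (fun s => g s 0 w) u + d01 (fun s => g s v 0) u - d01 (fun s => g s 1 1) u.
Proof.
move=> u01 v01 w01; have i0 := in01_0 R; have i1 := in01_1 R.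
apply: d01_addB_cst_diff => //; last 3 first.
- exact: (g_C1_2 false).1.
- exact: (g_C1_3 false).1.
- exact: (g_C1_3 true).1.
move=> y z y01 z01; rewrite !coons_translated_faces // !g_face3 // !g_face2 //.
by apply/rowP => j; rewrite !mxE; ring.
Qed.

Lemma coons_d01_v {u v w} : in01 u -> in01 v -> in01 w ->
  (exists l, has_deriv01 (fun s => T u s w) v l) /\
  d01 (fun s => T u s w) v =
    d01 (fun s => g u s 0) v + d01 (fun s => g 1 s w) v - d01 (fun s => g 1 s 1) v.
Proof.
move=> u01 v01 w01; have i0 := in01_0 R; have i1 := in01_1 R.
apply: d01_addB_cst_diff => //; last 3 first.
- exact: (g_C1_3 false).2.1.
- exact: (g_C1_1 true).1.
- exact: (g_C1_1 true).1.
move=> y z y01 z01; rewrite !coons_translated_faces // !g_face1 // !g_face3 //.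
by apply/rowP => j; rewrite !mxE; ring.
Qed.

Lemma coons_d01_w {u v w} : in01 u -> in01 v -> in01 w ->
  (exists l, has_deriv01 (fun s => T u v s) w l) /\
  d01 (fun s => T u v s) w =
    d01 (fun s => g 1 v s) w + d01 (fun s => g u 0 s) w - d01 (fun s => g 1 1 s) w.
Proof.
move=> u01 v01 w01; have i0 := in01_0 R; have i1 := in01_1 R.
apply: d01_addB_cst_diff => //; last 3 first.
- exact: (g_C1_1 true).2.1.
- exact: (g_C1_2 false).2.1.
- exact: (g_C1_1 true).2.1.
move=> y z y01 z01; rewrite !coons_translated_faces // !g_face1 // !g_face2 //.
by apply/rowP => j; rewrite !mxE; ring.
Qed.

End CoonsTranslatedFaces.

Theorem corollary1 (R : realType) (F0 F1 : R -> R)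
  (g : R -> R -> R -> 'rV[R]_3) (w1 w2 w3 : 'rV[R]_3) :
  (* blending functions *)
  C1_01 F0 -> C1_01 F1 ->
  (forall t, in01 t -> F0 t + F1 t = 1) -> F0 0 = 1 -> F0 1 = 0 ->
  (* boundary data: C^1 on each closed face in its two free coordinates *)
  (forall a : bool, C1_square (fun v w => g (b2r a) v w)) ->
  (forall b : bool, C1_square (fun u w => g u (b2r b) w)) ->
  (forall c : bool, C1_square (fun u v => g u v (b2r c))) ->
  (* opposite faces are translates of each other *)
  (forall v w, in01 v -> in01 w -> g 1 v w = g 0 v w + w1) ->
  (forall u w, in01 u -> in01 w -> g u 1 w = g u 0 w + w2) ->
  (forall u v, in01 u -> in01 v -> g u v 1 = g u v 0 + w3) ->
  (* images of opposite faces are disjoint *)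
  (forall v w v' w', in01 v -> in01 w -> in01 v' -> in01 w' -> g 0 v w <> g 1 v' w') ->
  (forall u w u' w', in01 u -> in01 w -> in01 u' -> in01 w' -> g u 0 w <> g u' 1 w') ->
  (forall u v u' v', in01 u -> in01 v -> in01 u' -> in01 v' -> g u v 0 <> g u' v' 1) ->
  (* uniform positivity of det[H1, H2, H3] *)
  (exists tau : R, 0 < tau /\
     forall u v w, in01 u -> in01 v -> in01 w ->
       tau < det3
         (d01 (fun s => g s 0 w) u + d01 (fun s => g s v 0) u - d01 (fun s => g s 1 1) u)
         (d01 (fun s => g u s 0) v + d01 (fun s => g 1 s w) v - d01 (fun s => g 1 s 1) v)
         (d01 (fun s => g 1 v s) w + d01 (fun s => g u 0 s) w - d01 (fun s => g 1 1 s) w)) ->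
  regular (coons F0 F1 g).
Proof.
move=> _ _ F01 _ _ gC1_1 gC1_2 gC1_3 face1 face2 face3 _ _ _ [tau [tau0 Htau]].
move=> u v w u01 v01 w01.
have [ex_u ->] := coons_d01_u F01 face1 face2 face3 gC1_2 gC1_3 u01 v01 w01.
have [ex_v ->] := coons_d01_v F01 face1 face2 face3 gC1_1 gC1_3 u01 v01 w01.
have [ex_w ->] := coons_d01_w F01 face1 face2 face3 gC1_1 gC1_2 u01 v01 w01.
by do ![split=> //]; exact: lt_trans tau0 (Htau u v w u01 v01 w01).
Qed.
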